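(* Let $X$ be an infinite compact metric space and $T:X\to X$ a continuous map. Let $K(X)$ be the hyperspace of all non-empty closed subsets of $X$ with the Hausdorff metric, and let $T_K:K(X)\to K(X)$ be the induced map $T_K(C)=TC$. Then the following are equivalent: (1) $(K(X),T_K)$ is Devaney chaotic; (2) $(K(X),T_K)$ is an HY-system; (3) $(X,T)$ is an HY-system.
   Context: For a compact metric space $(X,d)$, the Hausdorff metric on $K(X)$ is $d_H(A,B)=\max\{\max_{x\in A}\min_{y\in B}d(x,y),\ \max_{y\in B}\min_{x\in A}d(x,y)\}$; with it $K(X)$ is a compact metric space and $T_K$ is continuous. A dynamical system $(Y,S)$ is a compact metric space $Y$ with a continuous self-map $S$. $(Y,S)$ is transitive if for any two non-empty open sets $U,V\subset Y$ there is $n\in\mathbb{N}=\{1,2,\dots\}$ with $S^nU\cap V\neq\emptyset$; totally transitive if $(Y,S^n)$ is transitive for every $n\in\mathbb{N}$. A point $y$ is periodic if $S^ny=y$ for some $n\in\mathbb{N}$. $(Y,S)$ is Devaney chaotic if it is transitive and its set of periodic points is dense in $Y$ (for infinite $Y$ sensitive dependence on initial conditions follows automatically, so this agrees with the usual definition). $(Y,S)$ has dense small periodic sets if for every non-empty open $U\subset Y$ there exist a non-empty closed set $Z\subset U$ and $k\in\mathbb{N}$ with $S^kZ\subset Z$. $(Y,S)$ is an HY-system if it is totally transitive and has dense small periodic sets. *)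

From Stdlib Require Import Reals List.
Open Scope R_scope.

Definition is_metric {X : Type} (d : X -> X -> R) : Prop :=
  (forall x y, 0 <= d x y) /\
  (forall x y, d x y = 0 <-> x = y) /\
  (forall x y, d x y = d y x) /\
  (forall x y z, d x z <= d x y + d y z).

(** Compactness of a metric space (sequential compactness, equivalent for
    metric spaces). *)
Definition compact_metric {X : Type} (d : X -> X -> R) : Prop :=
  forall u : nat -> X, exists (phi : nat -> nat) (l : X),
    (forall n, (phi n < phi (S n))%nat) /\
    (forall eps, eps > 0 -> exists N, forall n, (n >= N)%nat -> d (u (phi n)) l < eps).

Definition infinite_type (X : Type) : Prop :=
  forall l : list X, exists x, ~ In x l.

Definition continuous_map {X : Type} (d : X -> X -> R) (T : X -> X) : Prop :=
  forall x eps, eps > 0 -> exists delta, delta > 0 /\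
    forall y, d x y < delta -> d (T x) (T y) < eps.

(** * Generic topological dynamics on a subspace [sp] of a type [Y], whose
    topology is given by a family of balls [ball y eps]. *)

Definition rel_open {Y : Type} (sp : Y -> Prop) (ball : Y -> R -> Y -> Prop)
  (U : Y -> Prop) : Prop :=
  (forall y, U y -> sp y) /\
  (forall y, U y -> exists eps, eps > 0 /\ forall z, sp z -> ball y eps z -> U z).

Definition rel_closed {Y : Type} (sp : Y -> Prop) (ball : Y -> R -> Y -> Prop)
  (Z : Y -> Prop) : Prop :=
  (forall y, Z y -> sp y) /\
  rel_open sp ball (fun y => sp y /\ ~ Z y).

Definition nonempty {Y : Type} (U : Y -> Prop) : Prop := exists y, U y.

Definition transitive {Y : Type} (sp : Y -> Prop) (ball : Y -> R -> Y -> Prop)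
  (S : Y -> Y) : Prop :=
  forall U V, rel_open sp ball U -> nonempty U -> rel_open sp ball V -> nonempty V ->
    exists n, (n >= 1)%nat /\ exists y, U y /\ V (Nat.iter n S y).

Definition totally_transitive {Y : Type} (sp : Y -> Prop) (ball : Y -> R -> Y -> Prop)
  (S : Y -> Y) : Prop :=
  forall n, (n >= 1)%nat -> transitive sp ball (Nat.iter n S).

Definition periodic_point {Y : Type} (S : Y -> Y) (y : Y) : Prop :=
  exists n, (n >= 1)%nat /\ Nat.iter n S y = y.

Definition dense_periodic {Y : Type} (sp : Y -> Prop) (ball : Y -> R -> Y -> Prop)
  (S : Y -> Y) : Prop :=
  forall U, rel_open sp ball U -> nonempty U -> exists y, U y /\ periodic_point S y.

Definition devaney_chaotic {Y : Type} (sp : Y -> Prop) (ball : Y -> R -> Y -> Prop)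
  (S : Y -> Y) : Prop :=
  transitive sp ball S /\ dense_periodic sp ball S.

Definition dense_small_periodic_sets {Y : Type} (sp : Y -> Prop)
  (ball : Y -> R -> Y -> Prop) (S : Y -> Y) : Prop :=
  forall U, rel_open sp ball U -> nonempty U ->
    exists Z, nonempty Z /\ rel_closed sp ball Z /\ (forall z, Z z -> U z) /\
      exists k, (k >= 1)%nat /\ forall z, Z z -> Z (Nat.iter k S z).

Definition HY_system {Y : Type} (sp : Y -> Prop) (ball : Y -> R -> Y -> Prop)
  (S : Y -> Y) : Prop :=
  totally_transitive sp ball S /\ dense_small_periodic_sets sp ball S.

Definition whole {X : Type} : X -> Prop := fun _ => True.

Definition mball {X : Type} (d : X -> X -> R) (x : X) (eps : R) (y : X) : Prop :=
  d x y < eps.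

Definition KX {X : Type} (d : X -> X -> R) (C : X -> Prop) : Prop :=
  nonempty C /\ rel_closed whole (mball d) C.

(** [hd_le d A B r] : the Hausdorff distance of A and B is at most r, i.e.
    max_{x in A} min_{y in B} d(x,y) <= r and symmetrically (for compact A, B
    the max/min are attained, so this is the literal meaning). *)
Definition hd_le {X : Type} (d : X -> X -> R) (A B : X -> Prop) (r : R) : Prop :=
  (forall x, A x -> exists y, B y /\ d x y <= r) /\
  (forall y, B y -> exists x, A x /\ d x y <= r).

Definition hball {X : Type} (d : X -> X -> R) (A : X -> Prop) (eps : R)
  (B : X -> Prop) : Prop :=
  exists r, 0 <= r /\ r < eps /\ hd_le d A B r.

Definition TK {X : Type} (T : X -> X) (C : X -> Prop) : X -> Prop :=
  fun y => exists x, C x /\ T x = y.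

From Stdlib Require Import Reals List Lia Lra Classical FunctionalExtensionality PropExtensionality IndefiniteDescription.
Open Scope R_scope.

(** The proof goes through two finitary properties of [(X, T)]:
    - fan transitivity: any ball is sent by a common iterate [T^n] into each of
      finitely many given balls;
    - pair transitivity along multiples: for every [p >= 1], finitely many pairs
      of [e]-balls [B(a_i, e) -> B(b_i, e)] are joined by a common [T^(c p)].
    We show (a) [T_K] transitive => fan transitive (test on Hausdorff balls around
    a singleton and a finite set); (b) [T] HY => fan transitive (induction on the
    number of targets, re-using a small periodic set to restart near the centre);
    (c) fan => pair transitive (surjectivity of [T] plus a chain of targets
    covering all residues mod [p]); (d) pair transitive => [T_K] totally
    transitive (finite [e]-nets of compact sets); (e) small periodic sets of [T]
    => dense periodic points of [T_K] (glue periodic cores near a finite net);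
    (f) dense periodic points of [T_K] => small periodic sets of [T_K]
    (singletons of [K(X)] are closed); (g) [T_K] HY => [T] HY (singletons and
    orbit closures). *)

Lemma iter_iter {A} (f : A -> A) n m x : Nat.iter n (Nat.iter m f) x = Nat.iter (n * m) f x.
Proof. induction n as [|n IH]; simpl; auto. rewrite Nat.iter_add, IH; auto. Qed.

Lemma iter_comm {A} (f : A -> A) n m x :
  Nat.iter n f (Nat.iter m f x) = Nat.iter m f (Nat.iter n f x).
Proof. rewrite <- !Nat.iter_add. f_equal. lia. Qed.

Lemma strict_incr_ge (phi : nat -> nat) :
  (forall n, (phi n < phi (S n))%nat) -> forall n, (n <= phi n)%nat.
Proof. intros H n; induction n; [lia|]. specialize (H n); lia. Qed.

Lemma transitive_of_totally_transitive {Y} (sp : Y -> Prop) ball (S : Y -> Y) :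
  totally_transitive sp ball S -> transitive sp ball S.
Proof. intro H. exact (H 1%nat (le_n _)). Qed.

Lemma inv_succ_small eps : eps > 0 -> exists N : nat, forall n, (n >= N)%nat -> / (INR n + 1) < eps.
Proof.
  intro He. destruct (archimed_cor1 eps He) as [N [H1 H2]]. exists N. intros n Hn.
  apply Rle_lt_trans with (/ INR N); auto.
  apply Rinv_le_contravar. apply lt_0_INR; lia.
  apply le_INR in Hn. lra.
Qed.

Lemma zero_of_small x : 0 <= x -> (forall eps, eps > 0 -> x < eps) -> x = 0.
Proof. intros H1 H2. destruct (Req_dec x 0); auto. specialize (H2 (x/2)). lra. Qed.

Lemma list_min_pos {A} (l : list A) (f : A -> R) : (forall a, In a l -> f a > 0) ->
  exists s, s > 0 /\ forall a, In a l -> s <= f a.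
Proof.
  induction l as [|a l IH]; intro H.
  - exists 1; split; [lra|intros ? []].
  - destruct IH as [s [Hs H']]. { intros; apply H; right; auto. }
    exists (Rmin s (f a)). split. apply Rmin_pos; auto. apply H; left; auto.
    intros b [<-|Hb]. apply Rmin_r. apply Rle_trans with s; [apply Rmin_l|auto].
Qed.

Lemma list_choice {A B : Type} (P : A -> B -> Prop) (l : list A) :
  (forall a, In a l -> exists b, P a b) ->
  exists lb : list B, (forall a, In a l -> exists b, In b lb /\ P a b) /\
    (forall b, In b lb -> exists a, In a l /\ P a b).
Proof.
  induction l as [|a l IH]; intro H.
  - exists nil; split; [intros a []|intros b []].
  - destruct (H a (or_introl eq_refl)) as [b Hb].
    destruct IH as [lb [H1 H2]]. { intros; apply H; right; auto. }
    exists (b :: lb); split.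
    + intros a' [<-|Ha']. exists b; split; [left|]; auto.
      destruct (H1 a' Ha') as [b' [? ?]]. exists b'; split; [right|]; auto.
    + intros b' [<-|Hb']. exists a; split; [left|]; auto.
      destruct (H2 b' Hb') as [a' [? ?]]. exists a'; split; [right|]; auto.
Qed.

Section Metric.
Context {X : Type} (d : X -> X -> R).
Hypothesis Hm : is_metric d.

Lemma d_pos x y : 0 <= d x y.
Proof. destruct Hm as [H _]; auto. Qed.
Lemma d_refl x : d x x = 0.
Proof. destruct Hm as [_ [H _]]; apply H; auto. Qed.
Lemma d_eq x y : d x y = 0 -> x = y.
Proof. destruct Hm as [_ [H _]]; apply H; auto. Qed.
Lemma d_sym x y : d x y = d y x.
Proof. destruct Hm as [_ [_ [H _]]]; auto. Qed.
Lemma d_tri x y z : d x z <= d x y + d y z.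
Proof. destruct Hm as [_ [_ [_ H]]]; auto. Qed.

Definition closed_set (C : X -> Prop) : Prop :=
  forall y, ~ C y -> exists eps, eps > 0 /\ forall z, d y z < eps -> ~ C z.

Lemma closed_set_iff C : rel_closed whole (mball d) C <-> closed_set C.
Proof.
  unfold rel_closed, rel_open, closed_set, whole, mball. split.
  - intros [_ [_ H]] y Hy. destruct (H y (conj I Hy)) as [eps [He H']].
    exists eps; split; auto. intros z Hz. apply (H' z I Hz).
  - intros H. split; [auto|]. split; [auto|]. intros y [_ Hy].
    destruct (H y Hy) as [eps [He H']]. exists eps; split; auto.
Qed.

Definition converges (v : nat -> X) (l : X) : Prop :=
  forall eps, eps > 0 -> exists N, forall n, (n >= N)%nat -> d (v n) l < eps.

Lemma closed_limit C v l :
  closed_set C -> (exists N, forall n, (n >= N)%nat -> C (v n)) -> converges v l -> C l.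
Proof.
  intros Hc [N HN] Hv. apply NNPP; intro Hl.
  destruct (Hc l Hl) as [eps [He H]]. destruct (Hv eps He) as [N1 H1].
  apply (H (v (max N N1))). rewrite d_sym. apply H1; lia. apply HN; lia.
Qed.

Lemma ball_interior x r z :
  d x z < r -> exists delta, delta > 0 /\ forall w, d z w < delta -> d x w < r.
Proof.
  intro H. exists (r - d x z). split; [lra|]. intros w Hw.
  pose proof (d_tri x z w). lra.
Qed.

Lemma continuous_preimage_ball f x y s : continuous_map d f ->
  d y (f x) < s -> exists delta, delta > 0 /\ forall w, d x w < delta -> d y (f w) < s.
Proof.
  intros Hf H. destruct (Hf x (s - d y (f x)) ltac:(lra)) as [dl [Hdl H1]].
  exists dl; split; auto. intros w Hw. specialize (H1 w Hw).
  pose proof (d_tri y (f x) (f w)). lra.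
Qed.

Lemma continuous_iter f n : continuous_map d f -> continuous_map d (Nat.iter n f).
Proof.
  intro Hf. induction n as [|n IH]; intros x eps He.
  - exists eps; split; auto.
  - destruct (Hf (Nat.iter n f x) eps He) as [d1 [Hd1 H1]].
    destruct (IH x d1 Hd1) as [d2 [Hd2 H2]]. exists d2; split; auto.
    intros y Hy. simpl. apply H1, H2, Hy.
Qed.

Lemma ball_open x r : rel_open whole (mball d) (fun y => d x y < r).
Proof.
  split; [intros; exact I|]. intros y Hy. destruct (ball_interior x r y Hy) as [dl [H1 H2]].
  exists dl; split; auto.
Qed.

Lemma ball_nonempty x r : r > 0 -> nonempty (fun y => d x y < r).
Proof. intro Hr. exists x. rewrite d_refl; auto. Qed.

Lemma open_contains_ball U y :
  rel_open whole (mball d) U -> U y -> exists r, r > 0 /\ forall z, d y z < r -> U z.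
Proof.
  intros [_ H] Hy. destruct (H y Hy) as [r [Hr H']]. exists r; split; auto.
  intros z Hz; apply H'; [exact I|exact Hz].
Qed.

Lemma singleton_closed x : closed_set (fun y => y = x).
Proof.
  intros y Hy. exists (d y x). split.
  - destruct (Rle_lt_or_eq_dec 0 (d y x) (d_pos y x)); [lra|].
    exfalso; apply Hy; apply d_eq; auto.
  - intros z Hz ->. lra.
Qed.

Lemma finite_closed (l : list X) : closed_set (fun y => In y l).
Proof.
  intros y Hy. destruct (list_min_pos l (fun c => d y c)) as [s [Hs H]].
  { intros c Hc. destruct (Rle_lt_or_eq_dec 0 (d y c) (d_pos y c)); [lra|].
    exfalso. apply Hy. rewrite (d_eq y c); auto. }
  exists s; split; auto. intros z Hz Hzl. specialize (H z Hzl). lra.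
Qed.

Lemma union_closed A B : closed_set A -> closed_set B -> closed_set (fun x => A x \/ B x).
Proof.
  intros HA HB y Hy. destruct (HA y ltac:(tauto)) as [e1 [He1 H1]].
  destruct (HB y ltac:(tauto)) as [e2 [He2 H2]].
  exists (Rmin e1 e2); split. apply Rmin_pos; auto.
  intros z Hz [Hz'|Hz']. apply (H1 z); auto. pose proof (Rmin_l e1 e2); lra.
  apply (H2 z); auto. pose proof (Rmin_r e1 e2); lra.
Qed.

Lemma intersection_closed (C : nat -> X -> Prop) :
  (forall n, closed_set (C n)) -> closed_set (fun x => forall n, C n x).
Proof.
  intros HC y Hy. apply not_all_ex_not in Hy as [n Hn].
  destruct (HC n y Hn) as [eps [He H]]. exists eps; split; auto.
  intros z Hz Hz'. apply (H z Hz). apply Hz'.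
Qed.

Definition closure (A : X -> Prop) (y : X) : Prop :=
  forall eps, eps > 0 -> exists a, A a /\ d y a < eps.

Lemma closure_incl (A : X -> Prop) a : A a -> closure A a.
Proof. intros Ha eps He. exists a. rewrite d_refl. auto. Qed.

Lemma closure_closed A : closed_set (closure A).
Proof.
  intros y Hy. apply not_all_ex_not in Hy as [eps Heps].
  apply imply_to_and in Heps as [He Hn].
  exists (eps / 2). split; [lra|]. intros z Hz Hcz.
  destruct (Hcz (eps/2) ltac:(lra)) as [a [Ha Hd]]. apply Hn. exists a. split; auto.
  pose proof (d_tri y z a). lra.
Qed.

Lemma closure_in_ball A x s r : s < r -> (forall a, A a -> d x a < s) ->
  forall y, closure A y -> d x y < r.
Proof.
  intros Hsr HA y Hy. destruct (Hy (r - s) ltac:(lra)) as [a [Ha Hd]].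
  specialize (HA a Ha). pose proof (d_tri x a y). rewrite (d_sym a y) in H. lra.
Qed.

Lemma closure_invariant f A : continuous_map d f -> (forall a, A a -> A (f a)) ->
  forall y, closure A y -> closure A (f y).
Proof.
  intros Hf HA y Hy eps He. destruct (Hf y eps He) as [dl [Hdl Hcont]].
  destruct (Hy dl Hdl) as [a [Ha Hd]]. exists (f a). split; auto.
Qed.

End Metric.

Section Compact.
Context {X : Type} (d : X -> X -> R).
Hypotheses (Hm : is_metric d) (Hk : compact_metric d).

(** A point approximated by values of a continuous map on a closed set is such a
    value (extract a convergent subsequence of approximating preimages). *)
Lemma image_closure C f y : closed_set d C -> continuous_map d f ->
  (forall eps, eps > 0 -> exists x, C x /\ d y (f x) < eps) -> exists x, C x /\ f x = y.
Proof.
  intros Hc Hf H.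
  destruct (functional_choice (fun (n : nat) x => C x /\ d y (f x) < / (INR n + 1)))
    as [xs Hxs].
  { intro n. apply H. apply Rinv_0_lt_compat. pose proof (pos_INR n); lra. }
  destruct (Hk xs) as [phi [l [Hinc Hconv]]].
  assert (Cl : C l).
  { apply (closed_limit d Hm C (fun n => xs (phi n)) l Hc); auto.
    exists 0%nat. intros; apply Hxs. }
  exists l; split; auto. symmetry. apply (d_eq d Hm).
  apply zero_of_small; [apply (d_pos d Hm)|]. intros eps He.
  destruct (Hf l (eps/2) ltac:(lra)) as [dl [Hdl Hcl]].
  destruct (Hconv dl Hdl) as [N1 H1]. destruct (inv_succ_small (eps/2) ltac:(lra)) as [N2 H2].
  set (n := max N1 N2).
  pose proof (Hxs (phi n)) as [_ Hx]. pose proof (strict_incr_ge phi Hinc n).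
  assert (Ha : / (INR (phi n) + 1) < eps/2) by (apply H2; lia).
  assert (Hb : d l (xs (phi n)) < dl) by (rewrite (d_sym d Hm); apply H1; lia).
  specialize (Hcl _ Hb).
  pose proof (d_tri d Hm y (f (xs (phi n))) (f l)) as Ht.
  rewrite (d_sym d Hm (f (xs (phi n)))) in Ht. lra.
Qed.

Lemma image_closed C f : closed_set d C -> continuous_map d f -> closed_set d (TK f C).
Proof.
  intros Hc Hf y Hy. apply NNPP; intro H. apply Hy.
  destruct (image_closure C f y Hc Hf) as [x [Hx Hfx]].
  - intros eps He. apply NNPP; intro H2. apply H. exists eps; split; auto.
    intros z Hz [x [Hx <-]]. apply H2. exists x; auto.
  - exists x; auto.
Qed.

Fixpoint greedy_list (g : list X -> X) (n : nat) : list X :=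
  match n with O => nil | S n => g (greedy_list g n) :: greedy_list g n end.

Lemma greedy_list_in (g : list X -> X) m n :
  (m < n)%nat -> In (g (greedy_list g m)) (greedy_list g n).
Proof.
  induction n; intro H; [lia|]. simpl. destruct (Nat.eq_dec m n) as [->|Hne]; [left; auto|].
  right; apply IHn; lia.
Qed.

(** Otherwise a greedy choice would give an [eps]-separated sequence, which has
    no convergent subsequence. *)
Lemma finite_net (C : X -> Prop) : nonempty C -> forall eps, eps > 0 ->
  exists l : list X, l <> nil /\ hd_le d C (fun y => In y l) eps.
Proof.
  intros [c0 Hc0] eps He.
  cut (exists l : list X, l <> nil /\ (forall c, In c l -> C c) /\
         (forall x, C x -> exists c, In c l /\ d c x < eps)).
  { intros [l [Hl [Hin Hnet]]]. exists l; split; auto. split.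
    - intros x Hx. destruct (Hnet x Hx) as [c [Hc Hcx]].
      exists c; split; auto. rewrite (d_sym d Hm); lra.
    - intros c Hc. exists c; split; auto. rewrite (d_refl d Hm); lra. }
  apply NNPP; intro H.
  assert (Hfar : forall l : list X, exists x, (forall c, In c l -> C c) ->
     C x /\ forall c, In c l -> eps <= d c x).
  { intro l. destruct (classic (forall c, In c l -> C c)) as [Hl|Hl]; [|exists c0; tauto].
    destruct l as [|a l'].
    - exists c0; intros _; split; auto. intros c [].
    - apply NNPP; intro H2. apply H. exists (a :: l'); split; [discriminate|]. split; auto.
      intros x Hx. apply NNPP; intro H3. apply H2. exists x. intros _. split; auto.
      intros c Hc. apply Rnot_lt_le. intro H4. apply H3. exists c; auto. }
  destruct (functional_choice _ Hfar) as [g Hg].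
  assert (HC : forall n c, In c (greedy_list g n) -> C c).
  { induction n; simpl; [tauto|]. intros c [<-|Hc]; auto. apply (Hg _ IHn). }
  set (u := fun n => g (greedy_list g n)).
  assert (Hsep : forall m n, (m < n)%nat -> eps <= d (u m) (u n)).
  { intros m n Hmn. unfold u. apply (Hg (greedy_list g n) (HC n)). apply greedy_list_in; auto. }
  destruct (Hk u) as [phi [l [Hinc Hconv]]].
  destruct (Hconv (eps/2) ltac:(lra)) as [N HN].
  pose proof (HN N ltac:(lia)). pose proof (HN (S N) ltac:(lia)).
  pose proof (Hsep _ _ (Hinc N)).
  pose proof (d_tri d Hm (u (phi N)) l (u (phi (S N)))).
  rewrite (d_sym d Hm l) in H3. lra.
Qed.

Section PeriodicCore.
Variables (F : X -> X) (Z : X -> Prop).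
Hypotheses (HF : continuous_map d F) (HZ : closed_set d Z) (HZne : nonempty Z)
  (HZinv : forall z, Z z -> Z (F z)).

Let Zn (n : nat) : X -> Prop := TK (Nat.iter n F) Z.

Definition periodic_core : X -> Prop := fun x => forall n, TK (Nat.iter n F) Z x.

Lemma images_decreasing n m x : (n <= m)%nat -> Zn m x -> Zn n x.
Proof.
  intros Hnm [z [Hz <-]]. exists (Nat.iter (m - n) F z). split.
  - apply Nat.iter_invariant; auto.
  - rewrite <- Nat.iter_add. f_equal. lia.
Qed.

Lemma limit_in_core (w : nat -> X) (phi : nat -> nat) l : (forall n, Zn n (w n)) ->
  (forall n, (phi n < phi (S n))%nat) -> converges d (fun k => w (phi k)) l ->
  periodic_core l.
Proof.
  intros Hw Hinc Hconv n.
  apply (closed_limit d Hm (Zn n) (fun k => w (phi k)) l); auto.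
  - apply image_closed; auto. apply (continuous_iter d); auto.
  - exists n. intros k Hk'. apply (images_decreasing n (phi k)); auto.
    pose proof (strict_incr_ge phi Hinc k); lia.
Qed.

(** Non-empty: it contains a limit point of an orbit in [Z]. *)
Lemma periodic_core_nonempty : nonempty periodic_core.
Proof.
  destruct HZne as [z0 Hz0].
  destruct (Hk (fun n => Nat.iter n F z0)) as [phi [l [Hinc Hconv]]].
  exists l. apply (limit_in_core (fun n => Nat.iter n F z0) phi); auto.
  intro n. exists z0; auto.
Qed.

Lemma periodic_core_closed : closed_set d periodic_core.
Proof.
  apply intersection_closed. intro n. apply image_closed; auto. apply (continuous_iter d); auto.
Qed.

Lemma periodic_core_sub x : periodic_core x -> Z x.
Proof. intro Hx. destruct (Hx 0%nat) as [z [Hz <-]]. auto. Qed.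

(** [F]-invariant: a point of the core has [F]-preimages in every [F^n Z], and
    a limit of these lies in the core and maps to the point. *)
Lemma periodic_core_invariant : TK F periodic_core = periodic_core.
Proof.
  apply functional_extensionality; intro y; apply propositional_extensionality; split.
  - intros [x [Hx <-]] n. destruct (Hx n) as [z [Hz <-]].
    exists (F z); split; auto. apply Nat.iter_swap.
  - intro Hy.
    assert (Hw : forall n, exists w, Zn n w /\ F w = y).
    { intro n. destruct (Hy (S n)) as [z [Hz Hzy]].
      exists (Nat.iter n F z). split. exists z; auto. rewrite <- Hzy. reflexivity. }
    destruct (functional_choice _ Hw) as [w Hw'].
    destruct (Hk w) as [phi [l [Hinc Hconv]]].
    exists l; split.
    { apply (limit_in_core w phi); auto. apply Hw'. }
    apply (d_eq d Hm). apply zero_of_small; [apply (d_pos d Hm)|]. intros eps He.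
    destruct (HF l eps He) as [dl [Hdl Hcl]]. destruct (Hconv dl Hdl) as [N HN].
    specialize (HN N (le_n _)). rewrite (d_sym d Hm) in HN.
    specialize (Hcl _ HN). destruct (Hw' (phi N)) as [_ Heq]. rewrite Heq in Hcl. auto.
Qed.

End PeriodicCore.
End Compact.

Section Hyperspace.
Context {X : Type} (d : X -> X -> R).
Hypothesis Hm : is_metric d.

Lemma TK_iter (f : X -> X) n E : Nat.iter n (TK f) E = TK (Nat.iter n f) E.
Proof.
  induction n as [|n IH]; simpl; [|rewrite IH]; apply functional_extensionality; intro y;
    apply propositional_extensionality; unfold TK.
  - split; [intro H; exists y; auto | intros [x [Hx <-]]; auto].
  - split.
    + intros [x [[z [Hz <-]] <-]]. exists z; auto.
    + intros [z [Hz <-]]. exists (Nat.iter n f z); split; eauto.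
Qed.

Lemma TK_union (f : X -> X) A B : TK f (fun x => A x \/ B x) = (fun y => TK f A y \/ TK f B y).
Proof.
  apply functional_extensionality; intro y; apply propositional_extensionality. split.
  - intros [x [[Hx|Hx] <-]]; [left|right]; exists x; auto.
  - intros [[x [Hx <-]]|[x [Hx <-]]]; exists x; auto.
Qed.

Lemma hd_le_sym A B r : hd_le d A B r -> hd_le d B A r.
Proof.
  intros [H1 H2]. split.
  - intros y Hy. destruct (H2 y Hy) as [x [Hx Hxy]]. exists x. rewrite (d_sym d Hm). auto.
  - intros x Hx. destruct (H1 x Hx) as [y [Hy Hxy]]. exists y. rewrite (d_sym d Hm). auto.
Qed.

Lemma hd_le_tri A B C r1 r2 : hd_le d A B r1 -> hd_le d B C r2 -> hd_le d A C (r1 + r2).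
Proof.
  intros [H1 H2] [H3 H4]. split.
  - intros x Hx. destruct (H1 x Hx) as [y [Hy Hxy]]. destruct (H3 y Hy) as [z [Hz Hyz]].
    exists z; split; auto. pose proof (d_tri d Hm x y z); lra.
  - intros z Hz. destruct (H4 z Hz) as [y [Hy Hyz]]. destruct (H2 y Hy) as [x [Hx Hxy]].
    exists x; split; auto. pose proof (d_tri d Hm x y z); lra.
Qed.

Lemma hd_le_union A A' B B' r :
  hd_le d A B r -> hd_le d A' B' r -> hd_le d (fun x => A x \/ A' x) (fun y => B y \/ B' y) r.
Proof.
  intros [H1 H2] [H3 H4]. split.
  - intros x [Hx|Hx]; [destruct (H1 x Hx) as [y [Hy ?]]|destruct (H3 x Hx) as [y [Hy ?]]];
      exists y; auto.
  - intros y [Hy|Hy]; [destruct (H2 y Hy) as [x [Hx ?]]|destruct (H4 y Hy) as [x [Hx ?]]];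
      exists x; auto.
Qed.

Lemma hd_le_nonempty A B r : hd_le d A B r -> nonempty A -> nonempty B.
Proof. intros [H _] [x Hx]. destruct (H x Hx) as [y [Hy _]]. exists y; auto. Qed.

Lemma hball_of_hd_le A B r eps : 0 <= r -> r < eps -> hd_le d A B r -> hball d A eps B.
Proof. intros. exists r; auto. Qed.

Lemma hball_sym A eps B : hball d A eps B -> hball d B eps A.
Proof. intros [r [? [? H]]]. exists r. auto using hd_le_sym. Qed.

Lemma hball_singleton x r E : hball d (fun y => y = x) r E -> forall e, E e -> d x e < r.
Proof.
  intros [rho [_ [Hr [_ H2]]]] e He. destruct (H2 e He) as [x' [-> H]]. lra.
Qed.

Definition Kball (A : X -> Prop) (r : R) : (X -> Prop) -> Prop :=
  fun E => KX d E /\ hball d A r E.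

Lemma Kball_open A r : rel_open (KX d) (hball d) (Kball A r).
Proof.
  split; [intros y [H _]; auto|].
  intros E [HE [rho [Hrho0 [Hrho H]]]]. exists (r - rho). split; [lra|].
  intros F HF [rho' [Hrho0' [Hrho' H']]]. split; auto.
  exists (rho + rho'). split; [lra|split; [lra|]]. eapply hd_le_tri; eauto.
Qed.

Lemma Kball_nonempty A r : KX d A -> r > 0 -> nonempty (Kball A r).
Proof.
  intros HA Hr. exists A. split; auto. apply hball_of_hd_le with 0; try lra.
  split; intros x Hx; exists x; split; auto; rewrite (d_refl d Hm); lra.
Qed.

Lemma open_contains_Kball (U : (X -> Prop) -> Prop) A :
  rel_open (KX d) (hball d) U -> U A ->
  KX d A /\ exists eps, eps > 0 /\ forall F, KX d F -> hball d A eps F -> U F.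
Proof. intros [H1 H2] HA. split; auto. Qed.

Lemma KX_intro C : nonempty C -> closed_set d C -> KX d C.
Proof. intros H1 H2. split; auto. apply closed_set_iff; auto. Qed.

Lemma KX_closed C : KX d C -> closed_set d C.
Proof. intros [_ H]. apply (closed_set_iff d); auto. Qed.

Lemma KX_singleton x : KX d (fun y => y = x).
Proof. apply KX_intro. exists x; auto. apply singleton_closed; auto. Qed.

Lemma KX_finite (l : list X) : l <> nil -> KX d (fun y => In y l).
Proof.
  intro H. apply KX_intro. destruct l as [|a l]; [congruence|]. exists a; left; auto.
  apply finite_closed; auto.
Qed.

Lemma KX_image f C : compact_metric d -> continuous_map d f -> KX d C -> KX d (TK f C).
Proof.
  intros Hk Hf [[c Hc] HC]. apply KX_intro.
  - exists (f c), c; auto.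
  - apply image_closed; auto. apply closed_set_iff; auto.
Qed.

Lemma far_from_closed D x : closed_set d D -> ~ D x ->
  exists r, r > 0 /\ forall E, E x -> ~ hball d E r D.
Proof.
  intros HD Hx. destruct (HD x Hx) as [r [Hr Hr']]. exists r; split; auto.
  intros E Ex [rho [_ [Hrho [H1 _]]]]. destruct (H1 x Ex) as [y [Dy Hy]].
  apply (Hr' y); auto. lra.
Qed.

Lemma KX_point_closed D : KX d D -> rel_closed (KX d) (hball d) (fun E => E = D).
Proof.
  intro KD. split; [intros y ->; auto|]. split; [intros y [H _]; auto|].
  intros E [KE HED].
  assert (Hx : exists x, ~ (E x <-> D x)).
  { apply NNPP; intro H. apply HED. apply functional_extensionality; intro x;
    apply propositional_extensionality. apply NNPP; intro H2. apply H; exists x; auto. }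
  destruct Hx as [x Hx]. destruct (classic (E x)) as [Ex|Ex].
  - destruct (far_from_closed D x (KX_closed D KD)) as [r [Hr Hfar]]; [tauto|].
    exists r; split; auto. intros F KF HbF. split; auto. intros ->. apply (Hfar E Ex HbF).
  - destruct (far_from_closed E x (KX_closed E KE) Ex) as [r [Hr Hfar]].
    exists r; split; auto. intros F KF HbF. split; auto. intros ->.
    apply (Hfar D); [tauto|]. apply hball_sym; auto.
Qed.

End Hyperspace.

Section Dynamics.
Context {X : Type} (d : X -> X -> R).
Hypotheses (Hm : is_metric d) (Hk : compact_metric d).
Variable T : X -> X.
Hypothesis Hc : continuous_map d T.

(** A target list is a finite list of balls [B(y, s)], given as pairs [(y, s)]. *)
Definition positive_radii (ts : list (X * R)) : Prop := forall t, In t ts -> snd t > 0.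

Definition hits_all (x : X) (r : R) (n : nat) (ts : list (X * R)) : Prop :=
  forall t, In t ts -> exists u, d x u < r /\ d (fst t) (Nat.iter n T u) < snd t.

Definition fan_transitive : Prop :=
  forall x r, r > 0 -> forall ts, positive_radii ts ->
    exists n, (n >= 1)%nat /\ hits_all x r n ts.

Definition pair_transitive : Prop :=
  forall p, (p >= 1)%nat -> forall e, e > 0 -> forall l : list (X * X),
  exists c, (c >= 1)%nat /\ forall q, In q l ->
    exists u, d (fst q) u < e /\ d (snd q) (Nat.iter (c * p) T u) < e.

(** ** Step (a): transitivity of [T_K] gives fan transitivity.
    Apply it to the Hausdorff balls around [{x}] and around the finite set of
    target centres. *)
Lemma fan_of_K_transitive : transitive (KX d) (hball d) (TK T) -> fan_transitive.
Proof.
  intros Htr x r Hr ts Hts. destruct ts as [|t0 ts0] eqn:Ets.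
  { exists 1%nat; split; [lia|intros t []]. }
  rewrite <- Ets in *.
  destruct (list_min_pos ts snd Hts) as [s [Hs Hsl]].
  assert (Hne : map fst ts <> nil) by (rewrite Ets; discriminate).
  destruct (Htr (Kball d (fun y => y = x) r) (Kball d (fun y => In y (map fst ts)) s))
    as [n [Hn [E [[HE HbE] [_ HbV]]]]];
    try apply Kball_open; try apply Kball_nonempty; auto using KX_singleton, KX_finite.
  exists n; split; auto. intros t Ht. rewrite TK_iter in HbV.
  destruct HbV as [rho [_ [Hrho [H1 _]]]].
  destruct (H1 (fst t) (in_map fst ts t Ht)) as [y [[e [He <-]] Hy]].
  exists e; split. apply (hball_singleton d x r E HbE e He).
  specialize (Hsl t Ht). lra.
Qed.

Lemma balls_joined_along_multiples : totally_transitive whole (mball d) T ->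
  forall m, (m >= 1)%nat -> forall x r y s, r > 0 -> s > 0 ->
  exists n, (n >= 1)%nat /\ exists u, d x u < r /\ d y (Nat.iter (n * m) T u) < s.
Proof.
  intros H m Hm1 x r y s Hr Hs.
  destruct (H m Hm1 (fun z => d x z < r) (fun z => d y z < s)) as [n [Hn [u [Hu Hv]]]];
    try apply ball_open; try apply ball_nonempty; auto.
  exists n; split; auto. exists u; split; auto. rewrite <- iter_iter; auto.
Qed.

Lemma ball_contains_recurrent_orbit : dense_small_periodic_sets whole (mball d) T ->
  forall x r, r > 0 -> exists z k, (k >= 1)%nat /\ forall i, d x (Nat.iter (i * k) T z) < r.
Proof.
  intros H x r Hr.
  destruct (H (fun z => d x z < r)) as [Z [[z Hz] [_ [HZU [k [Hk1 HZk]]]]]];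
    try apply ball_open; try apply ball_nonempty; auto.
  exists z, k; split; auto. intro i. apply HZU.
  induction i as [|i IH]; simpl; auto. rewrite Nat.iter_add. apply HZk; auto.
Qed.

(** Take [z] near [x] whose [T^k]-orbit stays near [x], and
    [u ∈ B(p)] with [T^a u ∈ B(q)] for a multiple [a] of [k]. Hitting a small
    ball around [u] (and the remaining targets) from a small ball around [z]
    gives a point [w] with [T^n w ∈ B(p)], while [T^a w], still near [x], has
    [T^n (T^a w) = T^a (T^n w) ∈ B(q)]. *)
Lemma fan_cons : HY_system whole (mball d) T -> forall l : list (X * R),
  (forall x r p, r > 0 -> snd p > 0 -> exists n, (n >= 1)%nat /\ hits_all x r n (p :: l)) ->
  forall x r p q, r > 0 -> snd p > 0 -> snd q > 0 ->
  exists n, (n >= 1)%nat /\ hits_all x r n (p :: q :: l).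
Proof.
  intros [Htt Hdsp] l IH x r p q Hr Hp Hq.
  destruct (ball_contains_recurrent_orbit Hdsp x r Hr) as [z [k [Hk1 Hz]]].
  destruct (balls_joined_along_multiples Htt k Hk1 (fst p) (snd p) (fst q) (snd q) Hp Hq)
    as [n' [_ [u [Hu1 Hu2]]]].
  set (a := (n' * k)%nat) in *.
  assert (Hcont : continuous_map d (Nat.iter a T)) by (apply continuous_iter; auto).
  destruct (ball_interior d Hm _ _ _ Hu1) as [da [Hda Ha]].
  destruct (continuous_preimage_ball d Hm _ _ _ _ Hcont Hu2) as [db [Hdb Hb]].
  assert (Hz0 : d x z < r) by exact (Hz 0%nat).
  destruct (ball_interior d Hm _ _ _ Hz0) as [dc [Hdc Hc']].
  destruct (continuous_preimage_ball d Hm _ _ _ _ Hcont (Hz n')) as [dd [Hdd Hd']].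
  destruct (IH z (Rmin dc dd) (u, Rmin da db)) as [n [Hn Hhit]];
    try (apply Rmin_pos; auto).
  exists n; split; auto.
  destruct (Hhit (u, Rmin da db) (or_introl eq_refl)) as [w [Hw1 Hw2]]. simpl in Hw2.
  pose proof (Rmin_l dc dd). pose proof (Rmin_r dc dd).
  pose proof (Rmin_l da db). pose proof (Rmin_r da db).
  intros t [<-|[<-|Ht]].
  - exists w; split. apply Hc'; lra. apply Ha; lra.
  - exists (Nat.iter a T w); split. apply Hd'; lra. rewrite iter_comm. apply Hb; lra.
  - destruct (Hhit t (or_intror Ht)) as [w' [Hw1' Hw2']]. exists w'; split; auto.
    apply Hc'; lra.
Qed.

Lemma fan_of_HY : HY_system whole (mball d) T -> fan_transitive.
Proof.
  intros HY.
  assert (Hind : forall l, positive_radii l -> forall x r p, r > 0 -> snd p > 0 ->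
    exists n, (n >= 1)%nat /\ hits_all x r n (p :: l)).
  { induction l as [|q l IH]; intros Hl x r p Hr Hp.
    - destruct (balls_joined_along_multiples (proj1 HY) 1 (le_n _) x r (fst p) (snd p) Hr Hp)
        as [n [Hn [u [H1 H2]]]].
      exists n; split; auto. intros t [<-|[]]. exists u; split; auto.
      rewrite Nat.mul_1_r in H2; auto.
    - assert (Hq : snd q > 0) by (apply Hl; left; reflexivity).
      apply (fan_cons HY l); auto.
      intros x' r' p' Hr' Hp'. apply IH; auto. intros t Ht; apply Hl; right; auto. }
  intros x r Hr [|p l] Hl.
  - exists 1%nat; split; [lia|intros t []].
  - apply Hind; auto. intros t Ht; apply Hl; right; auto. apply Hl; left; auto.
Qed.

(** Fan transitivity makes [T], hence every iterate, surjective: each point is a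
    limit of images, and images of the compact space are closed. *)
Lemma iterate_surjective_of_fan : fan_transitive -> forall k y, exists x, Nat.iter k T x = y.
Proof.
  intros HP.
  assert (Hsurj : forall y, exists x, T x = y).
  { intro y. destruct (image_closure d Hm Hk (fun _ => True) T y) as [x [_ Hx]]; auto.
    - intros z Hz; exfalso; auto.
    - intros eps He. destruct (HP y 1 ltac:(lra) ((y, eps) :: nil)) as [n [Hn H]].
      { intros t [<-|[]]; simpl; auto. }
      destruct (H (y, eps) (or_introl eq_refl)) as [u [_ Hu]]. simpl in Hu.
      exists (Nat.iter (n - 1) T u). split; auto.
      replace n with (S (n - 1)) in Hu by lia. exact Hu.
    - exists x; auto. }
  induction k as [|k IH]; intro y. exists y; auto.
  destruct (Hsurj y) as [x1 <-]. destruct (IH x1) as [x2 <-]. exists x2. reflexivity.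
Qed.

(** For each delay [k0 + j], [j < p], a target ball whose [T^(k0+j)]-image lies
    in [B(y, s)]: a ball around a [T^(k0+j)]-preimage of [y]. *)
Lemma preimage_targets : fan_transitive -> forall (p k0 : nat) (y : X) (s : R), s > 0 ->
  exists ts : list (X * R), positive_radii ts /\
    forall j, (j < p)%nat -> exists t, In t ts /\
      forall w, d (fst t) w < snd t -> d y (Nat.iter (k0 + j) T w) < s.
Proof.
  intros HP p k0 y s Hs. induction p as [|p IH].
  - exists nil; split; [intros t []|intros j Hj; lia].
  - destruct IH as [ts [H1 H2]].
    destruct (iterate_surjective_of_fan HP (k0 + p) y) as [v Hv].
    destruct (continuous_preimage_ball d Hm _ v y s (continuous_iter d T (k0 + p) Hc))
      as [dl [Hdl Hb]].
    { rewrite Hv, (d_refl d Hm); auto. }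
    exists ((v, dl) :: ts). split.
    + intros t [<-|Ht]; auto.
    + intros j Hj. destruct (Nat.eq_dec j p) as [->|Hne].
      * exists (v, dl); split; [left; auto|]. exact Hb.
      * destruct (H2 j ltac:(lia)) as [t [Ht Ht']]. exists t; split; [right|]; auto.
Qed.

(** Pairs are handled one at a time: first send
    a small ball into [B(a, e)] by some [T^n0], then add targets that are
    [T^(n0+j)]-preimages of [B(b, e)]. *)
Lemma fan_chain : fan_transitive -> forall p e, e > 0 -> forall (l : list (X * X)) x0 r0,
  r0 > 0 -> exists z delta (ts : list (X * R)), delta > 0 /\
    (forall w, d z w < delta -> d x0 w < r0) /\ positive_radii ts /\
    forall n, hits_all z delta n ts ->
      forall j, (j < p)%nat -> forall q, In q l ->
        exists u, d (fst q) u < e /\ d (snd q) (Nat.iter (n + j) T u) < e.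
Proof.
  intros HP p e He l. induction l as [|q l IH]; intros x0 r0 Hr0.
  - exists x0, r0, nil. split; auto. split; auto. split; [intros t []|].
    intros; contradiction.
  - destruct (HP x0 r0 Hr0 ((fst q, e) :: nil)) as [n0 [_ H0]].
    { intros t [<-|[]]; auto. }
    destruct (H0 _ (or_introl eq_refl)) as [u [Hu1 Hu2]]. simpl in Hu2.
    destruct (ball_interior d Hm _ _ _ Hu1) as [da [Hda Ha]].
    destruct (continuous_preimage_ball d Hm _ _ _ _ (continuous_iter d T n0 Hc) Hu2)
      as [db [Hdb Hb]].
    destruct (preimage_targets HP p n0 (snd q) e He) as [tsq [Htsq1 Htsq2]].
    destruct (IH u (Rmin da db) (Rmin_pos _ _ Hda Hdb))
      as [z [dl [ts [Hdl [Hsub [Hts Hconc]]]]]].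
    pose proof (Rmin_l da db). pose proof (Rmin_r da db).
    exists z, dl, (tsq ++ ts). split; auto. split.
    { intros w Hw. apply Ha. specialize (Hsub w Hw). lra. }
    split. { intros t Ht. apply in_app_or in Ht as [Ht|Ht]; auto. }
    intros n Hhit j Hj q' Hq'. destruct Hq' as [<-|Hq'].
    + destruct (Htsq2 j Hj) as [t [Ht Ht']].
      destruct (Hhit t (in_or_app _ _ _ (or_introl Ht))) as [w [Hw1 Hw2]].
      exists (Nat.iter n0 T w). split.
      * apply Hb. specialize (Hsub w Hw1). lra.
      * specialize (Ht' _ Hw2). rewrite <- Nat.iter_add in *.
        replace (n + j + n0)%nat with (n0 + j + n)%nat by lia. exact Ht'.
    + apply (Hconc n); auto. intros t Ht. apply Hhit. apply in_or_app; auto.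
Qed.

Lemma round_up_to_multiple n p : (p >= 1)%nat -> exists j c, (j < p)%nat /\ (n + j = c * p)%nat.
Proof.
  intro Hp. induction n as [|n IH].
  - exists 0%nat, 0%nat; split; lia.
  - destruct IH as [j [c [Hj Hjc]]]. destruct j.
    + exists (p - 1)%nat, (S c); split; [lia|]. simpl. lia.
    + exists j, c; split; lia.
Qed.

(** Hit the target list of [fan_chain] at some time [n], and round [n] up to a
    multiple [c p] of [p]. *)
Lemma pair_of_fan : fan_transitive -> pair_transitive.
Proof.
  intros HP p Hp e He [|q0 l0].
  { exists 1%nat; split; [lia|intros q []]. }
  destruct (fan_chain HP p e He (q0 :: l0) (fst q0) 1 ltac:(lra))
    as [z [dl [ts [Hdl [_ [Hts Hconc]]]]]].
  destruct (HP z dl Hdl ts Hts) as [n [Hn Hhit]].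
  destruct (round_up_to_multiple n p Hp) as [j [c [Hj Hjc]]].
  exists c; split.
  - destruct c; simpl in Hjc; lia.
  - intros q Hq. rewrite <- Hjc. apply (Hconc n); auto.
Qed.

(** Finite version: for non-empty finite sets [la], [lb] there are [c >= 1] and a
    finite set [lu] that is [e]-close to [la] and whose [T^(c m)]-image is
    [e]-close to [lb] (join every pair [(a, b)] of [la × lb]). *)
Lemma finite_sets_joined : pair_transitive -> forall m, (m >= 1)%nat -> forall e, e > 0 ->
  forall la lb : list X, la <> nil -> lb <> nil ->
  exists c lu, (c >= 1)%nat /\ lu <> nil /\
    hd_le d (fun y => In y la) (fun y => In y lu) e /\
    hd_le d (TK (Nat.iter (c * m) T) (fun y => In y lu)) (fun y => In y lb) e.
Proof.
  intros HM m Hm1 e He la lb Hla Hlb.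
  destruct (HM m Hm1 e He (list_prod la lb)) as [c [Hc1 Hq]].
  destruct (list_choice (fun q u => d (fst q) u < e /\ d (snd q) (Nat.iter (c * m) T u) < e)
     (list_prod la lb) Hq) as [lu [H1 H2]].
  destruct la as [|a0 la']; [congruence|]. destruct lb as [|b0 lb']; [congruence|].
  set (la := a0 :: la') in *. set (lb := b0 :: lb') in *.
  assert (Ha0 : In a0 la) by (left; auto). assert (Hb0 : In b0 lb) by (left; auto).
  exists c, lu. split; auto. split.
  { destruct (H1 (a0, b0) (in_prod _ _ _ _ Ha0 Hb0)) as [u [Hu _]].
    destruct lu; [contradiction|discriminate]. }
  split; split.
  - intros a Ha. destruct (H1 (a, b0) (in_prod _ _ _ _ Ha Hb0)) as [u [Hu [Hu1 _]]].
    exists u; split; auto. simpl in Hu1; lra.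
  - intros u Hu. destruct (H2 u Hu) as [[a b] [Hab [Hu1 _]]].
    apply in_prod_iff in Hab as [Ha _]. exists a; split; auto. simpl in Hu1; lra.
  - intros y [u [Hu <-]]. destruct (H2 u Hu) as [[a b] [Hab [_ Hu2]]].
    apply in_prod_iff in Hab as [_ Hb]. exists b; split; auto.
    rewrite (d_sym d Hm). simpl in Hu2; lra.
  - intros b Hb. destruct (H1 (a0, b) (in_prod _ _ _ _ Ha0 Hb)) as [u [Hu [_ Hu2]]].
    exists (Nat.iter (c * m) T u); split; [exists u; auto|].
    rewrite (d_sym d Hm). simpl in Hu2; lra.
Qed.

(** Approximating [A] and [B] by finite [e]-nets reduces total transitivity of
    [T_K] to the finite version. *)
Lemma K_totally_transitive_of_pair : pair_transitive -> totally_transitive (KX d) (hball d) (TK T).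
Proof.
  intros HM m Hm1 U V HU [A HA] HV [B HB].
  destruct (open_contains_Kball d U A HU HA) as [KA [eps1 [He1 HU1]]].
  destruct (open_contains_Kball d V B HV HB) as [KB [eps2 [He2 HV1]]].
  set (e := Rmin eps1 eps2 / 3).
  assert (He : e > 0) by (unfold e; pose proof (Rmin_pos _ _ He1 He2); lra).
  assert (He1' : e + e < eps1) by (unfold e; pose proof (Rmin_l eps1 eps2); lra).
  assert (He2' : e + e < eps2) by (unfold e; pose proof (Rmin_r eps1 eps2); lra).
  destruct (finite_net d Hm Hk A (proj1 KA) e He) as [la [Hla Hneta]].
  destruct (finite_net d Hm Hk B (proj1 KB) e He) as [lb [Hlb Hnetb]].
  destruct (finite_sets_joined HM m Hm1 e He la lb Hla Hlb) as [c [lu [Hc1 [Hlu [Hu Hv]]]]].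
  exists c; split; auto. exists (fun y => In y lu). split.
  - apply HU1; [apply KX_finite; auto|].
    apply hball_of_hd_le with (e + e); try lra. eapply hd_le_tri; eauto.
  - rewrite iter_iter, TK_iter. apply HV1.
    + apply KX_image; auto. apply continuous_iter; auto. apply KX_finite; auto.
    + apply hball_of_hd_le with (e + e); try lra.
      apply (hd_le_sym d Hm). apply (hd_le_tri d Hm _ _ _ _ _ Hv). apply (hd_le_sym d Hm _ _ _ Hnetb).
Qed.

(** Near any finite set there is a closed set [D], [e]-close to it, with
    [T^k D = D]: near each point take the periodic core of a small periodic set,
    with a common period for all points. *)
Lemma periodic_set_near_finite : dense_small_periodic_sets whole (mball d) T ->
  forall e, e > 0 -> forall l : list X, exists D k, (k >= 1)%nat /\ closed_set d D /\
    hd_le d (fun y => In y l) D e /\ TK (Nat.iter k T) D = D.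
Proof.
  intros Hdsp e He l. induction l as [|c l IH].
  - exists (fun _ => False), 1%nat. split; [lia|split; [|split]].
    + intros y _. exists 1; split; [lra|]. auto.
    + split; intros ? [].
    + apply functional_extensionality; intro y; apply propositional_extensionality.
      split; [intros [x [[] _]]|intros []].
  - destruct IH as [D' [k' [Hk' [HD'c [HD'near HD'inv]]]]].
    destruct (Hdsp (fun y => d c y < e)) as [Z [HZne [HZcl [HZU [k0 [Hk0 HZk0]]]]]];
      try apply ball_open; try apply ball_nonempty; auto.
    apply (closed_set_iff d) in HZcl.
    set (S := Nat.iter (k' * k0) T).
    assert (HS : continuous_map d S) by (apply continuous_iter; auto).
    assert (HZS : forall z, Z z -> Z (S z)).
    { intros z Hz. unfold S. rewrite <- iter_iter. apply Nat.iter_invariant; auto. }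
    assert (HD'S : TK S D' = D').
    { unfold S. rewrite Nat.mul_comm.
      replace (Nat.iter (k0 * k') T) with (Nat.iter k0 (Nat.iter k' T))
        by (apply functional_extensionality; intro; apply iter_iter).
      rewrite <- TK_iter. apply (Nat.iter_invariant k0 _ _ (fun E => E = D')); auto.
      intros E ->; auto. }
    set (Dc := periodic_core S Z).
    assert (HDcinv : TK S Dc = Dc) by (apply (periodic_core_invariant d Hm Hk); auto).
    exists (fun x => Dc x \/ D' x), (k' * k0)%nat. split; [nia|split; [|split]].
    + apply union_closed; auto. apply (periodic_core_closed d Hm Hk); auto.
    + apply (hd_le_union d (fun y => c = y)); auto.
      destruct (periodic_core_nonempty d Hm Hk S Z HS HZcl HZne HZS) as [p Hp].
      split.
      * intros y <-. exists p; split; auto. apply Rlt_le, HZU, (periodic_core_sub S Z), Hp.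
      * intros q Hq. exists c; split; auto. apply Rlt_le, HZU, (periodic_core_sub S Z), Hq.
    + fold S. rewrite TK_union, HDcinv, HD'S. reflexivity.
Qed.

(** A finite [e]-net of [A] and a periodic set [e]-close to the net give a
    periodic point of [T_K] within [2e] of [A]. *)
Lemma K_dense_periodic_of_dsp : dense_small_periodic_sets whole (mball d) T ->
  dense_periodic (KX d) (hball d) (TK T).
Proof.
  intros Hdsp U HU [A HA].
  destruct (open_contains_Kball d U A HU HA) as [KA [eps [He HU1]]].
  set (e := eps / 3). assert (He' : e > 0) by (unfold e; lra).
  destruct (finite_net d Hm Hk A (proj1 KA) e He') as [l [Hl Hnet]].
  destruct (periodic_set_near_finite Hdsp e He' l) as [D [k [Hk1 [HDc [Hnear HDinv]]]]].
  assert (HAD : hd_le d A D (e + e)) by (eapply hd_le_tri; eauto).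
  exists D. split.
  - apply HU1.
    + apply KX_intro; auto. eapply hd_le_nonempty; [exact HAD|apply KA].
    + apply hball_of_hd_le with (e + e); auto; unfold e; lra.
  - exists k; split; auto. rewrite TK_iter. auto.
Qed.

(** ** Step (f): dense periodic points in [K(X)] give dense small periodic sets
    in [K(X)], taking for the small periodic set the singleton of a periodic
    point. *)
Lemma K_dsp_of_dense_periodic : dense_periodic (KX d) (hball d) (TK T) ->
  dense_small_periodic_sets (KX d) (hball d) (TK T).
Proof.
  intros Hdp U HU HUne. destruct (Hdp U HU HUne) as [D [HD [n [Hn Hper]]]].
  exists (fun E => E = D). split; [exists D; auto|split; [|split]].
  - apply KX_point_closed; auto. apply (open_contains_Kball d U D HU HD).
  - intros z ->; auto.
  - exists n; split; auto. intros z ->. rewrite Hper; auto.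
Qed.

(** Total transitivity passes to [X] through singletons. *)
Lemma totally_transitive_of_K : totally_transitive (KX d) (hball d) (TK T) ->
  totally_transitive whole (mball d) T.
Proof.
  intros Htt m Hm1 U V HU [x Hx] HV [y Hy].
  destruct (open_contains_ball d U x HU Hx) as [r [Hr HUr]].
  destruct (open_contains_ball d V y HV Hy) as [s [Hs HVs]].
  destruct (Htt m Hm1 (Kball d (fun z => z = x) r) (Kball d (fun z => z = y) s))
    as [n [Hn [E [[HE HbE] [_ HbV]]]]];
    try apply Kball_open; try apply Kball_nonempty; auto using KX_singleton.
  rewrite iter_iter, TK_iter in HbV. destruct HbV as [rho [_ [Hrho [H1 _]]]].
  destruct (H1 y eq_refl) as [w [[e [He <-]] Hw]].
  exists n; split; auto. exists e; split.
  - apply HUr. apply (hball_singleton d x r E HbE e He).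
  - rewrite iter_iter. apply HVs. lra.
Qed.

(** A small periodic set of [K(X)] near [{x}] yields one of [X] near [x]: the
    closure of the [T^k]-orbit of one of its members. *)
Lemma dsp_of_K : dense_small_periodic_sets (KX d) (hball d) (TK T) ->
  dense_small_periodic_sets whole (mball d) T.
Proof.
  intros Hdsp U HU [x Hx]. destruct (open_contains_ball d U x HU Hx) as [r [Hr HUr]].
  destruct (Hdsp (Kball d (fun z => z = x) (r/2))) as [Z [[C HC] [_ [HZU [k [Hk1 HZk]]]]]];
    try apply Kball_open; try apply Kball_nonempty; auto using KX_singleton; try lra.
  set (orbit := fun y => exists j c, C c /\ y = Nat.iter (j * k) T c).
  assert (Horbit : forall y, orbit y -> d x y < r/2).
  { intros y [j [c [Hc' ->]]].
    assert (Zj : Z (TK (Nat.iter (j * k) T) C)).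
    { rewrite <- TK_iter, <- iter_iter. apply Nat.iter_invariant; auto. }
    destruct (HZU _ Zj) as [_ Hb]. apply (hball_singleton d x (r/2) _ Hb). exists c; auto. }
  destruct (HZU C HC) as [[[c0 Hc0] _] _].
  exists (closure d orbit). split; [|split; [|split]].
  - exists c0. apply (closure_incl d Hm). exists 0%nat, c0; auto.
  - apply (closed_set_iff d), closure_closed; auto.
  - intros y Hy. apply HUr. apply (closure_in_ball d Hm orbit x (r/2) r); auto; lra.
  - exists k; split; auto. apply closure_invariant; [apply continuous_iter; auto|].
    intros y [j [c [Hc' ->]]]. exists (S j), c. split; auto.
    rewrite <- Nat.iter_add. reflexivity.
Qed.

End Dynamics.

Theorem theorem1 (X : Type) (d : X -> X -> R) (T : X -> X)
  (Hmetric : is_metric d) (Hcompact : compact_metric d)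
  (Hinf : infinite_type X) (Hcont : continuous_map d T) :
  (devaney_chaotic (KX d) (hball d) (TK T) <-> HY_system (KX d) (hball d) (TK T)) /\
  (HY_system (KX d) (hball d) (TK T) <-> HY_system whole (mball d) T).
Proof.
  assert (HX_to_K : HY_system whole (mball d) T ->
    totally_transitive (KX d) (hball d) (TK T) /\ dense_periodic (KX d) (hball d) (TK T)).
  { intros HY. split.
    - apply (K_totally_transitive_of_pair d); auto.
      apply (pair_of_fan d); auto. apply (fan_of_HY d); auto.
    - apply (K_dense_periodic_of_dsp d); auto. apply HY. }
  assert (HK_to_X : HY_system (KX d) (hball d) (TK T) -> HY_system whole (mball d) T).
  { intros [Htt Hdsp]. split; [apply (totally_transitive_of_K d) | apply (dsp_of_K d)]; auto. }
  split; split.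
  - intros [Htr Hdp]. split; [|apply (K_dsp_of_dense_periodic d); auto].
    apply (K_totally_transitive_of_pair d); auto.
    apply (pair_of_fan d); auto. apply (fan_of_K_transitive d); auto.
  - intro HK. destruct (HX_to_K (HK_to_X HK)) as [Htt Hdp].
    split; auto. apply transitive_of_totally_transitive; auto.
  - exact HK_to_X.
  - intro HY. destruct (HX_to_K HY) as [Htt Hdp].
    split; auto. apply (K_dsp_of_dense_periodic d); auto.
Qed.
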